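(* Let $1\le i\le n$, let $K\subset\mathbb{R}^n$ be a compact convex set contained in some $i$-dimensional affine subspace, and let $L$ be an $i$-dimensional linear subspace of $\mathbb{R}^n$. Then $\mathrm{r}(K|L;L)\leq\mathrm{r}(K;\mathrm{aff}(K))$.
   Context: $K|L$ denotes the orthogonal projection of $K$ onto $L$, $\mathrm{aff}(K)$ the affine hull of $K$, and for a set $C$ contained in an affine subspace $A$, $\mathrm{r}(C;A)$ denotes the Euclidean inradius of $C$ measured within $A$ (the largest radius of a ball of $A$ contained in $C$). *)

From HB Require Import structures.
From mathcomp Require Import all_boot all_order all_algebra.
From mathcomp Require Import all_classical all_reals all_analysis.
Set Implicit Arguments. Unset Strict Implicit. Unset Printing Implicit Defensive.
Import Order.TTheory GRing.Theory Num.Theory.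
Import numFieldNormedType.Exports.
Local Open Scope classical_set_scope.
Local Open Scope ring_scope.

Section Defs.
Variables (R : realType) (n : nat).
Implicit Types (x y : 'rV[R]_n) (K C A : set 'rV[R]_n) (L : 'M[R]_n).

Definition edot x y : R := \sum_(j < n) x 0 j * y 0 j.
Definition enorm x : R := Num.sqrt (edot x x).

Definition lsub L : set 'rV[R]_n := [set v | (v <= L)%MS].

Definition orth_proj K L : set 'rV[R]_n :=
  [set y | (y <= L)%MS /\ exists2 x, K x & forall v, (v <= L)%MS -> edot (x - y) v = 0].

Definition aff K : set 'rV[R]_n :=
  [set z | exists m (p : 'I_m -> 'rV[R]_n) (w : 'I_m -> R),
     [/\ forall j, K (p j), \sum_(j < m) w j = 1 & z = \sum_(j < m) w j *: p j]].

Definition ball_in A x (r : R) : set 'rV[R]_n := [set y | A y /\ enorm (y - x) <= r].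

Definition inradius C A : \bar R :=
  ereal_sup [set (r%:E)%E | r in [set r : R | 0 <= r /\ exists2 x, A x & ball_in A x r `<=` C]].

End Defs.

From HB Require Import structures.
From mathcomp Require Import all_boot all_order all_algebra.
From mathcomp Require Import all_classical all_reals all_analysis.
From mathcomp Require Import lra.
Import Order.TTheory GRing.Theory Num.Theory.
Import numFieldNormedType.Exports.
Local Open Scope classical_set_scope.
Local Open Scope ring_scope.
Set Implicit Arguments. Unset Strict Implicit.

(* Let B_L(y, r) lie in K|L, and pick x0 in K projecting to y.  All of K lies
   in a translate of an i-dimensional space U, and since the projections of
   K - x0 fill the r-ball of L, the projection maps U onto L; as both have
   dimension i, it is injective on U.  Hence a point z of aff(K) with
   |z - x0| <= r is the only point of x0 + U over y + (z - x0)|L, a point of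
   B_L(y, r) which is the projection of some point of K: so z lies in K, and
   B_aff(K)(x0, r) is contained in K. *)

Section Dot.
Variables (R : realType) (n : nat).
Implicit Types (x y z : 'rV[R]_n).

Definition dotm x y : R := (x *m y^T) 0 0.

Lemma edotE x y : edot x y = dotm x y.
Proof. by rewrite /edot /dotm !mxE; apply: eq_bigr => j _; rewrite mxE. Qed.

Lemma dotmC x y : dotm x y = dotm y x.
Proof. by rewrite /dotm -[y *m x^T]trmxK trmx_mul trmxK [in RHS]mxE. Qed.

Lemma dotmBl x y z : dotm (x - y) z = dotm x z - dotm y z.
Proof. by rewrite /dotm mulmxBl !mxE. Qed.

Lemma dotmBr x y z : dotm z (x - y) = dotm z x - dotm z y.
Proof. by rewrite dotmC dotmBl !(dotmC z). Qed.

Lemma dotmZl (c : R) x y : dotm (c *: x) y = c * dotm x y.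
Proof. by rewrite /dotm -scalemxAl !mxE. Qed.

Lemma dotmZr (c : R) x y : dotm y (c *: x) = c * dotm y x.
Proof. by rewrite dotmC dotmZl dotmC. Qed.

Lemma dotm_ge0 x : 0 <= dotm x x.
Proof. by rewrite -edotE /edot sumr_ge0 // => j _; rewrite -expr2 sqr_ge0. Qed.

Lemma dotm_eq0 x : dotm x x = 0 -> x = 0.
Proof.
rewrite -edotE /edot => /eqP; rewrite psumr_eq0 => [/allP x0|j _]; last first.
  by rewrite -expr2 sqr_ge0.
apply/rowP => j; rewrite mxE; apply/eqP.
by have := x0 j (mem_index_enum j); rewrite mulf_eq0 orbb.
Qed.

Lemma enorm_le x (r : R) : 0 <= r -> (enorm x <= r) = (dotm x x <= r ^+ 2).
Proof.
move=> r0; rewrite /enorm edotE -ler_sqr ?nnegrE ?sqrtr_ge0 //.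
by rewrite sqr_sqrtr // dotm_ge0.
Qed.

Lemma enorm_le0 x : enorm x <= 0 -> x = 0.
Proof.
rewrite enorm_le // expr0n /= => x0.
by apply: dotm_eq0; apply/le_anti; rewrite x0 dotm_ge0.
Qed.

End Dot.

Section OrthProjection.
Variables (R : realType) (n : nat) (L : 'M[R]_n).
Implicit Types (x y w : 'rV[R]_n).

Let B := row_base L.

Lemma gram_row_base_unit : B *m B^T \in unitmx.
Proof.
rewrite -row_free_unit -kermx_eq0 -submx0; apply/row_subP => j.
set v := row j (kermx (B *m B^T)).
have vG : v *m (B *m B^T) = 0 by rewrite /v -row_mul mulmx_ker row0.
have vB : v *m B = 0.
  by apply: dotm_eq0; rewrite /dotm trmx_mul mulmxA -(mulmxA v) vG mul0mx mxE.
have : v *m B = 0 *m B by rewrite vB mul0mx.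
by move/(row_free_inj (row_base_free L)) ->; rewrite sub0mx.
Qed.

Definition projmx : 'M[R]_n := B^T *m invmx (B *m B^T) *m B.

Definition orthL w := forall v, (v <= L)%MS -> edot w v = 0.

Lemma projmx_sub x : (x *m projmx <= L)%MS.
Proof. by rewrite /projmx mulmxA -(eq_row_base L) submxMl. Qed.

Lemma orthLP w : reflect (orthL w) (w *m B^T == 0).
Proof.
apply: (iffP eqP) => [wB v | wL].
  rewrite edotE -(eq_row_base L) -/B => /submxP [a ->].
  by rewrite /dotm trmx_mul mulmxA wB mul0mx mxE.
apply/rowP => j; rewrite [RHS]mxE.
have jL : (row j B <= L)%MS by rewrite -(eq_row_base L) row_sub.
rewrite -(wL _ jL) /edot !mxE; by apply: eq_bigr => k _; rewrite !mxE.
Qed.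

Lemma projmx_orth x : orthL (x - x *m projmx).
Proof.
have PB : projmx *m B^T = B^T.
  by rewrite /projmx -[_ *m B *m B^T]mulmxA -mulmxA mulVmx ?gram_row_base_unit ?mulmx1.
by apply/orthLP; rewrite mulmxBl -mulmxA PB subrr.
Qed.

Lemma projmx_unique x w : (w <= L)%MS -> orthL (x - w) -> x *m projmx = w.
Proof.
move=> wL xw; set e := x *m projmx - w.
have eL : (e <= L)%MS by rewrite addmx_sub ?eqmx_opp ?projmx_sub.
have eo : orthL e.
  have -> : e = (x - w) - (x - x *m projmx) by rewrite /e opprB [RHS]addrC -[RHS]addrA addKr.
  apply/orthLP; rewrite mulmxBl.
  by move/orthLP: xw => /eqP ->; move/orthLP: (projmx_orth x) => /eqP ->; rewrite subrr.
by apply/eqP; rewrite -subr_eq0; apply/eqP/dotm_eq0; rewrite -edotE eo.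
Qed.

Lemma dotm_projmx_le x : dotm (x *m projmx) (x *m projmx) <= dotm x x.
Proof.
set p := x *m projmx.
have xpp : dotm (x - p) p = 0 by rewrite -edotE projmx_orth // projmx_sub.
have -> : dotm x x = dotm p p + dotm (x - p) (x - p).
  move: xpp; rewrite dotmBl => /eqP; rewrite subr_eq0 => /eqP xp.
  by rewrite dotmBl !dotmBr (dotmC p x) xp subrr subr0 addrC subrK.
by rewrite lerDl dotm_ge0.
Qed.

Lemma orth_projP (K : set 'rV[R]_n) y :
  orth_proj K L y <-> exists2 x, K x & x *m projmx = y.
Proof.
split=> [[yL [x Kx xy]] | [x Kx <-]]; first by exists x => //; exact: projmx_unique.
by split; [exact: projmx_sub | exists x => //; exact: projmx_orth].
Qed.

End OrthProjection.

Lemma sub_aff_shift (R : realType) n m (K : set 'rV[R]_n) (p : 'rV[R]_n)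
    (U : 'M[R]_(m, n)) z :
  (forall x, K x -> (x - p <= U)%MS) -> aff K z -> (z - p <= U)%MS.
Proof.
move=> KU [k [q [w [Kq w1 ->]]]].
have -> : \sum_(j < k) w j *: q j - p = \sum_(j < k) w j *: (q j - p).
  rewrite -[p in LHS]scale1r -w1 scaler_suml -sumrB.
  by apply: eq_bigr => j _; rewrite scalerBr.
by apply: summx_sub => j _; apply: scalemx_sub; apply: KU.
Qed.

Lemma submx_ball (R : realType) n m (L : 'M[R]_(m, n)) (M : 'M[R]_n) (r : R) :
  0 < r -> (forall w, (w <= L)%MS -> dotm w w <= r ^+ 2 -> (w <= M)%MS) ->
  (L <= M)%MS.
Proof.
move=> r0 ballM; apply/row_subP => j; set v := row j L.
have v0 := dotm_ge0 v; set t := r / (dotm v v + 1).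
have t0 : 0 < t by rewrite divr_gt0 // ltr_wpDl.
have tv : (t *: v <= M)%MS.
  apply: ballM; first by rewrite scalemx_sub ?row_sub.
  rewrite dotmZl dotmZr mulrA -expr2 /t expr_div_n mulrAC.
  rewrite ler_pdivrMr ?exprn_gt0 ?ltr_wpDl // ler_pM2l ?exprn_gt0 //; nra.
by rewrite -[v]scale1r -(mulVf (lt0r_neq0 t0)) -scalerA scalemx_sub.
Qed.

Lemma mulmx_rank_inj (R : fieldType) n m (U : 'M[R]_(m, n)) (A : 'M[R]_n)
    (u v : 'rV[R]_n) :
  \rank (U *m A) = \rank U -> (u <= U)%MS -> (v <= U)%MS ->
  u *m A = v *m A -> u = v.
Proof.
move=> rUA uU vU uvA; apply/eqP; rewrite -subr_eq0; apply/eqP.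
have := mxrank_mul_ker U A; rewrite rUA -[X in _ = X]addn0 => /addnI /eqP.
rewrite mxrank_eq0 => /eqP capU0.
have : (u - v <= U :&: kermx A)%MS.
  rewrite sub_capmx addmx_sub ?eqmx_opp //=.
  by apply/sub_kermxP; rewrite mulmxBl uvA subrr.
by rewrite capU0 submx0 => /eqP.
Qed.

Section BallLift.
Variables (R : realType) (n : nat) (K : set 'rV[R]_n) (L U : 'M[R]_n) (p : 'rV[R]_n).
Hypothesis sub_K_U : forall x, K x -> (x - p <= U)%MS.
Hypothesis rank_U_L : (\rank U <= \rank L)%N.

Lemma ball_orth_proj_lift y r x0 :
  0 <= r -> ball_in (lsub L) y r `<=` orth_proj K L ->
  K x0 -> x0 *m projmx L = y -> ball_in (aff K) x0 r `<=` K.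
Proof.
move=> r0 ballK Kx0 x0y z [Az zr].
have diffU k : (k - p <= U)%MS -> (k - x0 <= U)%MS.
  move=> kU; have -> : k - x0 = (k - p) - (x0 - p) by rewrite opprB addrA subrK.
  by rewrite addmx_sub // eqmx_opp sub_K_U.
have lift w : (w <= L)%MS -> dotm w w <= r ^+ 2 ->
    exists2 k, K k & (k - x0) *m projmx L = w.
  move=> wL wr; have [k Kk kyw] : exists2 k, K k & k *m projmx L = y + w.
    apply/(orth_projP L); apply: ballK.
    split; first by rewrite /lsub /= addmx_sub // -x0y projmx_sub.
    by rewrite (addrC y) addrK enorm_le.
  by exists k => //; rewrite mulmxBl kyw x0y (addrC y) addrK.
have [r_eq0 | r_neq0] := eqVneq r 0.
  by move: zr; rewrite r_eq0 => /enorm_le0/eqP; rewrite subr_eq0 => /eqP ->.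
have LUP : (L <= U *m projmx L)%MS.
  apply: (submx_ball (r := r)) => [|w wL wr]; first by rewrite lt0r r_neq0.
  by have [k Kk <-] := lift w wL wr; rewrite submxMr // diffU ?sub_K_U.
have rankUP : \rank (U *m projmx L) = \rank U.
  apply/eqP; rewrite eqn_leq mxrankM_maxl (leq_trans rank_U_L) ?mxrankS //.
have [k Kk kz] : exists2 k, K k & (k - x0) *m projmx L = (z - x0) *m projmx L.
  apply: lift; first exact: projmx_sub.
  by apply: le_trans (dotm_projmx_le _ _) _; rewrite -enorm_le.
have zU := diffU _ (sub_aff_shift sub_K_U Az).
have := mulmx_rank_inj rankUP (diffU _ (sub_K_U Kk)) zU kz.
by move/(congr1 (+%R^~ x0)); rewrite !subrK => <-.
Qed.

End BallLift.

Theorem lemma4p2 (R : realType) (n i : nat) (K : set 'rV[R]_n) (L : 'M[R]_n) :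
  (1 <= i)%N -> (i <= n)%N ->
  compact K -> convex_set K ->
  (exists (p : 'rV[R]_n) (U : 'M[R]_n), \rank U = i /\ forall x, K x -> (x - p <= U)%MS) ->
  \rank L = i ->
  (inradius (orth_proj K L) (lsub L) <= inradius K (aff K))%E.
Proof.
move=> _ _ _ _ [p [U [rU KU]]] rL.
apply: ereal_sup_le => _ [r [r0 [y Ly ballK]] <-]; exists r => //; split => //.
have [x0 Kx0 x0y] : exists2 x0, K x0 & x0 *m projmx L = y.
  apply/(orth_projP L); apply: ballK.
  by split => //; rewrite subrr enorm_le // /dotm mul0mx mxE sqr_ge0.
exists x0.
  exists 1%N, (fun=> x0), (fun=> 1).
  by split => //; rewrite big_ord1 ?scale1r.
by apply: (ball_orth_proj_lift KU) r0 ballK Kx0 x0y; rewrite rU rL.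
Qed.
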